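(* Let $B$ be an $n\times n$ skew-symmetrizable matrix, $\mathbf d$ positive integers, $D=\mathrm{diag}(d_1,\dots,d_n)$, and let $G^t=(g^t_{ij})$ be the $G$-matrices of the $(\mathbf d,\mathbf z)$-cluster pattern with principal coefficients and initial seed $(\mathbf x,\mathbf y,B)$. Put $\tilde g^t_{ij}=d_ig^t_{ij}d_j^{-1}$, i.e. $\tilde G^t=DG^tD^{-1}$. Then for every vertex $t$, $\tilde G^t$ is an integer matrix equal to the $G$-matrix at $t$ of the ordinary cluster pattern with principal coefficients and initial seed $(\mathbf x,\mathbf y,DB)$.
   Context: All matrices are integer, $[a]_+=\max(a,0)$; $DB$ is skew-symmetrizable. A semifield is an abelian multiplicative group with a commutative associative $\oplus$ over which multiplication distributes; $\mathcal F=\mathbb Q\mathbb P(w_1,\dots,w_n)$. Mutation data: positive integers $\mathbf d$ and $z_{i,s}$ ($1\le s\le d_i-1$) with $z_{i,s}=z_{i,d_i-s}$, $z_{i,0}=z_{i,d_i}=1$. The $(\mathbf d,\mathbf z)$-mutation $\mu_k(\mathbf{x},\mathbf{y},B)=(\mathbf{x}',\mathbf{y}',B')$ of a seed (skew-symmetrizable $B=(b_{ij})$, $\mathbf x\in\mathcal F^n$, $\mathbf y\in\mathbb P^n$): $b'_{ij}=-b_{ij}$ if $i=k$ or $j=k$, else $b'_{ij}=b_{ij}+d_k([-b_{ik}]_+b_{kj}+b_{ik}[b_{kj}]_+)$; $y'_k=y_k^{-1}$, $y'_i=y_i(y_k^{[\varepsilon b_{ki}]_+})^{d_k}(\bigoplus_{s=0}^{d_k}z_{k,s}y_k^{\varepsilon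 s})^{-b_{ki}}$ ($i\ne k$); $x'_i=x_i$ ($i\ne k$), $x'_k=x_k^{-1}(\prod_jx_j^{[-\varepsilon b_{jk}]_+})^{d_k}\frac{\sum_{s=0}^{d_k}z_{k,s}\hat y_k^{\varepsilon s}}{\bigoplus_{s=0}^{d_k}z_{k,s}y_k^{\varepsilon s}}$, $\hat y_i=y_i\prod_jx_j^{b_{ji}}$, $\varepsilon=\pm1$. $\mathbb T_n$ is the $n$-regular tree with edges labeled $1,\dots,n$, distinct labels at each vertex; a cluster pattern assigns seeds to vertices related by $\mu_k$ along edges labeled $k$, initial seed at fixed $t_0$. Principal coefficients: $\mathrm{Trop}(\mathbf y,\mathbf z)$ is the free abelian group generated by formal $y_1,\dots,y_n$, $z_{i,s}$ ($z_{i,s}=z_{i,d_i-s}$), with $\oplus$ the componentwise minimum of exponents; the pattern with principal coefficients lives in it with initial seed $(\mathbf x,\mathbf y,B)$. Each $x^t_i$ equals an $X$-function $X^t_i\in\mathbb Z[x_1^{\pm1},\dots,x_n^{\pm1},\mathbf y,\mathbf z]$, homogeneous for the grading $\deg x_i=\mathbf e_i$, $\deg y_j=-\sum_ib_{ij}\mathbf e_i$ ($B$ the initial matrix), $\deg z_{i,s}=0$; $\deg X^t_j=\sum_ig^t_{ij}\mathbf e_i$ defines $G^t=(g^t_{ij})$. The ordinary cluster pattern with principal coefficients is the special case $\mathbf d=(1,\dots,1)$ (no $\mathbf z$), with $G$-matrices defined the same way (using its own initial matrix for the grading). *)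

(* Model of (d,z)-cluster patterns with principal coefficients,
   realized by X-functions (Laurent polynomials in x, y, z). *)
From HB Require Import structures.
From mathcomp Require Import all_boot all_order all_algebra.

Import Order.TTheory GRing.Theory Num.Theory.
Local Open Scope ring_scope.

Definition posp (a : int) : int := if 0 <= a then a else 0.

Definition skew_symmetrizable {n : nat} (B : 'M[int]_n) : Prop :=
  exists r : 'I_n -> nat, (forall i, (0 < r i)%N) /\
    forall i j, (r i)%:Z * B i j = - ((r j)%:Z * B j i).

Definition dmat {n : nat} (d : 'I_n -> nat) (B : 'M[int]_n) : 'M[int]_n :=
  \matrix_(i, j) ((d i)%:Z * B i j).

(* index set for the generators z_{i,s}; z_{i,s} (1 <= s <= d_i - 1) is stored
   at index (i, minn s (d_i - s)), which encodes z_{i,s} = z_{i,d_i-s}. *)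
Definition zidx {n : nat} (d : 'I_n -> nat) : finType := {i : 'I_n & 'I_(d i)}.

(* Elements of Trop(y,z): exponent vectors in y and in z *)
Definition Trop {n : nat} (d : 'I_n -> nat) :=
  ({ffun 'I_n -> int} * {ffun zidx d -> int})%type.

Definition tone {n : nat} (d : 'I_n -> nat) : Trop d := ([ffun _ => 0], [ffun _ => 0]).
Definition tmul {n : nat} {d : 'I_n -> nat} (a b : Trop d) : Trop d :=
  ([ffun i => a.1 i + b.1 i], [ffun p => a.2 p + b.2 p]).
Definition tpow {n : nat} {d : 'I_n -> nat} (a : Trop d) (c : int) : Trop d :=
  ([ffun i => c * a.1 i], [ffun p => c * a.2 p]).
(* tropical sum = componentwise minimum of exponents *)
Definition tmin {n : nat} {d : 'I_n -> nat} (a b : Trop d) : Trop d :=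
  ([ffun i => Num.min (a.1 i) (b.1 i)], [ffun p => Num.min (a.2 p) (b.2 p)]).
(* z_{k,s}, with z_{k,0} = z_{k,d_k} = 1 *)
Definition tz {n : nat} (d : 'I_n -> nat) (k : 'I_n) (s : nat) : Trop d :=
  ([ffun _ => 0],
   [ffun p : zidx d => if [&& tag p == k, (0 < s < d k)%N &
                             (val (tagged p) == minn s (d k - s))%N]
                       then 1 else 0]).
Definition yinit {n : nat} (d : 'I_n -> nat) (i : 'I_n) : Trop d :=
  ([ffun j => if j == i then 1 else 0], [ffun _ => 0]).

(* \bigoplus_{s=0}^{d_k} z_{k,s} y^s  (epsilon = +1) *)
Definition tsum {n : nat} {d : 'I_n -> nat} (k : 'I_n) (y : Trop d) : Trop d :=
  foldr (fun s acc => tmin (tmul (tz d k s) (tpow y s%:Z)) acc)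
        (tone d) (iota 1 (d k)).

Definition bmut {n : nat} (d : 'I_n -> nat) (k : 'I_n) (B : 'M[int]_n) : 'M[int]_n :=
  \matrix_(i, j) (if (i == k) || (j == k) then - B i j
                  else B i j + (d k)%:Z * (posp (- B i k) * B k j + B i k * posp (B k j))).

(* (d,z)-mutation of the coefficient tuple (epsilon = +1), B = matrix before mutation *)
Definition ymut {n : nat} (d : 'I_n -> nat) (k : 'I_n) (B : 'M[int]_n) (y : 'I_n -> Trop d)
  : 'I_n -> Trop d :=
  fun i => if i == k then tpow (y k) (-1)
           else tmul (tmul (y i) (tpow (y k) (posp (B k i) * (d k)%:Z)))
                     (tpow (tsum k (y k)) (- B k i)).

(* Vertices of T_n are encoded by words of edge labels read from t0;
   (B^t, y^t) computed along the word. *)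
Definition seedBY {n : nat} (d : 'I_n -> nat) (B0 : 'M[int]_n) (w : seq 'I_n)
  : 'M[int]_n * ('I_n -> Trop d) :=
  foldl (fun (s : 'M[int]_n * ('I_n -> Trop d)) k => (bmut d k s.1, ymut d k s.1 s.2))
        (B0, yinit d) w.

(* Laurent polynomials in x, y, z with integer coefficients: formal finite sums *)
Definition Mon {n : nat} (d : 'I_n -> nat) := ({ffun 'I_n -> int} * Trop d)%type.
Definition LP {n : nat} (d : 'I_n -> nat) := seq (int * Mon d).

Definition coeff {n : nat} {d : 'I_n -> nat} (p : LP d) (m : Mon d) : int :=
  \sum_(a <- p | a.2 == m) a.1.
Definition lp_eq {n : nat} {d : 'I_n -> nat} (p q : LP d) : Prop :=
  forall m, coeff p m = coeff q m.
Definition mon_mul {n : nat} {d : 'I_n -> nat} (a b : Mon d) : Mon d :=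
  ([ffun i => a.1 i + b.1 i], tmul a.2 b.2).
Definition lp_mul {n : nat} {d : 'I_n -> nat} (p q : LP d) : LP d :=
  [seq (a.1 * b.1, mon_mul a.2 b.2) | a <- p, b <- q].
Definition lp_one {n : nat} (d : 'I_n -> nat) : LP d := [:: (1, ([ffun _ => 0], tone d))].
Definition lp_pow {n : nat} {d : 'I_n -> nat} (p : LP d) (e : nat) : LP d :=
  iter e (lp_mul p) (lp_one d).
Definition lp_prod {n : nat} {d : 'I_n -> nat} (ps : seq (LP d)) : LP d :=
  foldr (@lp_mul n d) (lp_one d) ps.
Definition xvar {n : nat} (d : 'I_n -> nat) (i : 'I_n) : LP d :=
  [:: (1, ([ffun j => if j == i then 1 else 0], tone d))].
Definition lp_trop {n : nat} {d : 'I_n -> nat} (t : Trop d) : LP d := [:: (1, ([ffun _ => 0], t))].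

(* Exchange relation (epsilon = +1), with denominators cleared:
   x'_k * x_k * (\bigoplus_s z_{k,s} y_k^s)
     = \sum_{s=0}^{d_k} z_{k,s} y_k^s \prod_j x_j^{s b_jk + d_k [-b_jk]_+}
   (the exponents are >= 0, so absz is exact). *)
Definition exch {n : nat} (d : 'I_n -> nat) (B : 'M[int]_n) (y : 'I_n -> Trop d)
  (x : 'I_n -> LP d) (k : 'I_n) (xk' : LP d) : Prop :=
  lp_eq (lp_mul (lp_mul xk' (x k)) (lp_trop (tsum k (y k))))
        (flatten [seq lp_mul (lp_trop (tmul (tz d k s) (tpow (y k) s%:Z)))
                     (lp_prod [seq lp_pow (x j) (absz (s%:Z * B j k + (d k)%:Z * posp (- B j k)))
                              | j <- enum 'I_n])
                 | s <- iota 0 (d k).+1]).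

Definition is_XPattern {n : nat} (d : 'I_n -> nat) (B0 : 'M[int]_n) (X : seq 'I_n -> 'I_n -> LP d)
  : Prop :=
  (forall i, lp_eq (X [::] i) (xvar d i)) /\
  forall w k,
    (forall i, i != k -> lp_eq (X (rcons w k) i) (X w i)) /\
    exch d (seedBY d B0 w).1 (seedBY d B0 w).2 (X w) k (X (rcons w k) k).

(* grading: deg x_i = e_i, deg y_j = - sum_i b_ij e_i, deg z = 0 *)
Definition mdeg {n : nat} {d : 'I_n -> nat} (B0 : 'M[int]_n) (m : Mon d) (i : 'I_n) : int :=
  m.1 i - \sum_(j < n) B0 i j * m.2.1 j.

Definition is_Gmatrix {n : nat} (d : 'I_n -> nat) (B0 : 'M[int]_n) (X : seq 'I_n -> 'I_n -> LP d)
  (t : seq 'I_n) (G : 'M[int]_n) : Prop :=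
  forall j m, coeff (X t j) m != 0 -> forall i, mdeg B0 m i = G i j.

Definition ones (n : nat) : 'I_n -> nat := fun _ => 1%N.

From HB Require Import structures.
From mathcomp Require Import all_boot all_order all_algebra.
From mathcomp Require Import ring zify.
Import Order.TTheory GRing.Theory Num.Theory.
Local Open Scope ring_scope.

(* Every X-function is a nonzero Laurent polynomial, homogeneous for the principal grading.
   In the exchange relation, x'_k x_k times one tropical monomial equals a sum of monomials of
   a common degree: the dependence on the summation index cancels because G^t B^t = B C^t, with
   C^t the matrix of c-vectors. A quotient of homogeneous Laurent polynomials is homogeneous
   (compare leading and trailing monomials for a monomial order that compares degrees first),
   so the G-matrices satisfy the g-vector mutation rule driven by B^t and C^t. For the ordinary
   pattern with initial matrix DB the exchange matrices are D B^t and the c-vectors are the same,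
   so this recursion commutes with conjugation by D. *)

Local Notation ilex := (seqlexi int).

Section LexiMap.
Variables (I : Type) (l : seq I).

Lemma lexi_map_addr (f g h : I -> int) :
  ([seq f i + h i | i <- l] <= [seq g i + h i | i <- l] :> ilex)%O =
  ([seq f i | i <- l] <= [seq g i | i <- l] :> ilex)%O.
Proof. by elim: l => //= i s IH; rewrite !lexi_cons !lerD2r IH. Qed.

Lemma ltxi_map_addr (f g h : I -> int) :
  ([seq f i + h i | i <- l] < [seq g i + h i | i <- l] :> ilex)%O =
  ([seq f i | i <- l] < [seq g i | i <- l] :> ilex)%O.
Proof. by elim: l => //= i s IH; rewrite !ltxi_cons !lerD2r IH. Qed.

End LexiMap.

Lemma exists_max_seq (A : eqType) (disp : Order.disp_t) (T : orderType disp)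
    (f : A -> T) (s : seq A) :
  s != [::] -> exists2 x, x \in s & forall y, y \in s -> (f y <= f x)%O.
Proof.
elim: s => [//|a s IH] _; case: (altP (s =P [::])) => [->|/IH [x xs hx]].
  by exists a; rewrite ?mem_head // => y; rewrite inE => /eqP ->.
case: (leP (f a) (f x)) => hax.
  by exists x; rewrite ?inE ?xs ?orbT // => y; rewrite inE => /predU1P [->|/hx].
exists a; first exact: mem_head.
by move=> y; rewrite inE => /predU1P [->//|/hx hy]; rewrite (le_trans hy) ?ltW.
Qed.

Lemma sumr_neq0_exists (T : Type) (r : seq T) (F : T -> int) :
  \sum_(x <- r) F x != 0 -> exists x, F x != 0.
Proof.
elim: r => [|x r IH]; first by rewrite big_nil eqxx.
by rewrite big_cons; case: (F x =P 0) => [->|/eqP]; [rewrite add0r|exists x].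
Qed.

Section Monomials.
Context {n : nat} {d : 'I_n -> nat}.
Implicit Types (a b c m M : Mon d) (p q : LP d).

Definition mon_one : Mon d := ([ffun _ => 0], tone d).
Definition mon_inv a : Mon d :=
  ([ffun i => - a.1 i], ([ffun i => - a.2.1 i], [ffun z => - a.2.2 z])).

Definition mexp a (v : 'I_n + ('I_n + zidx d)) : int :=
  match v with inl i => a.1 i | inr (inl i) => a.2.1 i | inr (inr z) => a.2.2 z end.

Lemma mon_ext a b : mexp a =1 mexp b -> a = b.
Proof.
case: a b => [a1 [a2 a3]] [b1 [b2 b3]] h.
by congr (_, (_, _)); apply/ffunP => v;
  [exact: h (inl v) | exact: h (inr (inl v)) | exact: h (inr (inr v))].
Qed.

Lemma mexp_mul a b v : mexp (mon_mul a b) v = mexp a v + mexp b v.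
Proof. by case: v => [i|[i|z]]; rewrite /= !ffunE. Qed.

Lemma mexp_inv a v : mexp (mon_inv a) v = - mexp a v.
Proof. by case: v => [i|[i|z]]; rewrite /= !ffunE. Qed.

Lemma mon_mulC a b : mon_mul a b = mon_mul b a.
Proof. by apply: mon_ext => v; rewrite !mexp_mul addrC. Qed.

Lemma mon_mulKV a b : mon_mul (mon_inv a) (mon_mul a b) = b.
Proof. by apply: mon_ext => v; rewrite !(mexp_mul, mexp_inv) addKr. Qed.

Lemma mon_mulK a b : mon_mul a (mon_mul (mon_inv a) b) = b.
Proof. by apply: mon_ext => v; rewrite !(mexp_mul, mexp_inv) addNKr. Qed.

Lemma mon_mulI a : injective (mon_mul a).
Proof. by move=> b c /(congr1 (mon_mul (mon_inv a))); rewrite !mon_mulKV. Qed.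

Lemma coeff_cons (e : int * Mon d) p m :
  coeff (e :: p) m = (if e.2 == m then e.1 else 0) + coeff p m.
Proof. by rewrite /coeff big_cons; case: ifP; rewrite ?add0r. Qed.

Lemma coeff_cat p q m : coeff (p ++ q) m = coeff p m + coeff q m.
Proof. by rewrite /coeff big_cat. Qed.

Lemma coeff_single (e : int) m0 m : coeff [:: (e, m0)] m = if m0 == m then e else 0.
Proof. by rewrite coeff_cons /coeff big_nil addr0. Qed.

Lemma mem_supp_coeff p m : coeff p m != 0 -> m \in map snd p.
Proof.
elim: p => [|e p IH]; first by rewrite /coeff big_nil eqxx.
rewrite coeff_cons /= in_cons; case: (e.2 =P m) => [<-|_]; first by rewrite eqxx.
by rewrite add0r => /IH ->; rewrite orbT.
Qed.

Lemma sum_lp_coeff p (U : seq (Mon d)) (f : Mon d -> int) :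
  uniq U -> {subset map snd p <= U} ->
  \sum_(e <- p) e.1 * f e.2 = \sum_(m <- U) coeff p m * f m.
Proof.
move=> uU sU; under [RHS]eq_bigr do rewrite /coeff big_distrl /= big_mkcond.
rewrite exchange_big /= big_seq [RHS]big_seq; apply: eq_bigr => e ep.
rewrite (bigD1_seq e.2) ?sU ?map_f //= eqxx big1 ?addr0 // => m.
by rewrite eq_sym => /negbTE ->.
Qed.

Lemma coeff_lp_mul p q M :
  coeff (lp_mul p q) M =
  \sum_(m <- undup (map snd p)) coeff p m * coeff q (mon_mul (mon_inv m) M).
Proof.
rewrite -sum_lp_coeff ?undup_uniq // => [|m]; last by rewrite mem_undup.
rewrite /coeff /lp_mul big_mkcond big_allpairs_dep /=; apply: eq_bigr => e _.
rewrite mulr_sumr [RHS]big_mkcond; apply: eq_bigr => e' _ /=.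
have -> : (mon_mul e.2 e'.2 == M) = (e'.2 == mon_mul (mon_inv e.2) M).
  by apply/eqP/eqP => [<-|->]; rewrite ?mon_mulKV ?mon_mulK.
by case: ifP; rewrite ?mulr0.
Qed.

Lemma coeff_lp_mul_neq0 p q M :
  coeff (lp_mul p q) M != 0 ->
  exists m r, [/\ coeff p m != 0, coeff q r != 0 & M = mon_mul m r].
Proof.
rewrite coeff_lp_mul => /sumr_neq0_exists [m]; rewrite mulf_eq0 negb_or => /andP [cp cq].
by exists m, (mon_mul (mon_inv m) M); rewrite mon_mulK.
Qed.

End Monomials.

Section Homogeneity.
Context {n : nat} {d : 'I_n -> nat} (B0 : 'M[int]_n).
Implicit Types (a b m : Mon d) (p : LP d).

Definition lp_neq0 p := exists m, coeff p m != 0.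

Definition homog p (g : 'I_n -> int) := forall m, coeff p m != 0 -> mdeg B0 m =1 g.

Lemma mdeg_mul a b i : mdeg B0 (mon_mul a b) i = mdeg B0 a i + mdeg B0 b i.
Proof.
rewrite /mdeg /= ffunE (eq_bigr (fun j => B0 i j * a.2.1 j + B0 i j * b.2.1 j)) => [|j _].
  by rewrite big_split /=; ring.
by rewrite ffunE mulrDr.
Qed.

End Homogeneity.

Section LeadingMonomial.
Context {n : nat} {d : 'I_n -> nat} {disp : Order.disp_t} {T : orderType disp}.
Variable key : Mon d -> T.
Hypothesis key_inj : injective key.
Hypothesis key_mul2r :
  forall a b c, (key (mon_mul a c) < key (mon_mul b c))%O = (key a < key b)%O.
Implicit Types (a b c m : Mon d) (p q : LP d).

Lemma key_mul2l_le a b c : (key (mon_mul c a) <= key (mon_mul c b))%O = (key a <= key b)%O.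
Proof.
rewrite !le_eqVlt !(inj_eq key_inj) (inj_eq (mon_mulI c)) !(mon_mulC c).
by rewrite key_mul2r.
Qed.

Definition is_lead p L := coeff p L != 0 /\ forall m, coeff p m != 0 -> (key m <= key L)%O.

Lemma lead_exists p : lp_neq0 p -> exists L, is_lead p L.
Proof.
case=> m0 cm0; set S := [seq m <- undup (map snd p) | coeff p m != 0].
have memS m : (m \in S) = (coeff p m != 0).
  by rewrite mem_filter andb_idr // => /mem_supp_coeff; rewrite mem_undup.
have /(@exists_max_seq _ _ _ key) [L] : S != [::].
  by apply/eqP => S0; move: (memS m0); rewrite S0 in_nil cm0.
by rewrite memS => cL hL; exists L; split=> // m; rewrite -memS; apply: hL.
Qed.

Lemma coeff_mul_lead p q Lp Lq : is_lead p Lp -> is_lead q Lq ->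
  coeff (lp_mul p q) (mon_mul Lp Lq) = coeff p Lp * coeff q Lq.
Proof.
move=> [cLp hp] [cLq hq].
rewrite coeff_lp_mul (bigD1_seq Lp) ?undup_uniq ?mem_undup ?mem_supp_coeff //=.
rewrite mon_mulKV big1 ?addr0 // => m mLp.
have [->|cm] := eqVneq (coeff p m) 0; first by rewrite mul0r.
set r := mon_mul (mon_inv m) _; have [->|cr] := eqVneq (coeff q r) 0; first by rewrite mulr0.
have eLL : mon_mul Lp Lq = mon_mul m r by rewrite /r mon_mulK.
have lt_mLp : (key (mon_mul m r) < key (mon_mul Lp r))%O.
  by rewrite key_mul2r lt_neqAle (inj_eq key_inj) mLp hp.
have le_rLq : (key (mon_mul Lp r) <= key (mon_mul Lp Lq))%O by rewrite key_mul2l_le hq.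
by have := lt_le_trans lt_mLp le_rLq; rewrite -eLL ltxx.
Qed.

Lemma mdeg_lead_div (B0 : 'M[int]_n) p A R f e L :
  lp_eq (lp_mul p A) R -> lp_neq0 A -> homog B0 A f -> homog B0 R e -> is_lead p L ->
  forall i, mdeg B0 L i = e i - f i.
Proof.
move=> pAR nA hA hR hL i; have [LA hLA] := lead_exists _ nA.
have cR : coeff R (mon_mul L LA) != 0.
  by rewrite -pAR coeff_mul_lead // mulf_neq0 ?hL.1 ?hLA.1.
by rewrite -(hR _ cR i) mdeg_mul (hA _ hLA.1 i) addrK.
Qed.

End LeadingMonomial.

Arguments lead_exists {n d disp T} key {p}.
Arguments mdeg_lead_div {n d disp T key} key_inj key_mul2r {B0 p A R f e L}.

Section DegreeOrder.
Context {n : nat} {d : 'I_n -> nat} (B0 : 'M[int]_n).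
Implicit Types (a b c m : Mon d) (p : LP d).

Definition deg_key m : ilex := [seq mdeg B0 m i | i <- enum 'I_n].

Definition mon_key m : ilex *l ilex :=
  (deg_key m, [seq mexp m v | v <- enum {: 'I_n + ('I_n + zidx d)}]).

Definition mon_key_dual m : (ilex *l ilex)^d := mon_key m.

Lemma mon_key_inj : injective mon_key.
Proof.
move=> a b [_ /eq_in_map h]; apply: mon_ext => v.
by apply: h; rewrite mem_enum.
Qed.

Lemma mon_key_mul2r a b c :
  (mon_key (mon_mul a c) < mon_key (mon_mul b c))%O = (mon_key a < mon_key b)%O.
Proof.
rewrite /mon_key /deg_key !ltxi_pair !(eq_map (mdeg_mul B0 _ c)) !(eq_map (mexp_mul _ c)).
by rewrite !lexi_map_addr ltxi_map_addr.
Qed.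

Lemma mon_key_dual_mul2r a b c :
  (mon_key_dual (mon_mul a c) < mon_key_dual (mon_mul b c))%O =
  (mon_key_dual a < mon_key_dual b)%O.
Proof. by rewrite !ltEdual mon_key_mul2r. Qed.

Lemma deg_key_le a b : (mon_key a <= mon_key b)%O -> (deg_key a <= deg_key b)%O.
Proof. by rewrite lexi_pair => /andP []. Qed.

(* The leading monomials of [p] for [mon_key] and for its dual both have degree [e - f];
   since [mon_key] compares degrees first, every monomial of [p] lies between them. *)
Lemma homog_div p A R f e :
  lp_eq (lp_mul p A) R -> lp_neq0 A -> homog B0 A f -> lp_neq0 R -> homog B0 R e ->
  homog B0 p (fun i => e i - f i).
Proof.
move=> pAR nA hA [M cM] hR m cm i.
have np : lp_neq0 p.
  by move: cM; rewrite -pAR => /coeff_lp_mul_neq0 [m' [_ [cm' _ _]]]; exists m'.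
have [L hL] := lead_exists mon_key np; have [L' hL'] := lead_exists mon_key_dual np.
have dL := mdeg_lead_div mon_key_inj mon_key_mul2r pAR nA hA hR hL.
have dL' := mdeg_lead_div (key := mon_key_dual) mon_key_inj mon_key_dual_mul2r
                          pAR nA hA hR hL'.
have : deg_key m = [seq e i - f i | i <- enum 'I_n].
  apply: le_anti; rewrite -{1}(eq_map dL) -(eq_map dL').
  by rewrite !deg_key_le // ?hL.2 // -leEdual hL'.2.
by move/eq_in_map => /(_ i (mem_enum _ i)).
Qed.

End DegreeOrder.

Arguments homog_div {n d B0 p A R f e}.

Section HomogeneousProducts.
Context {n : nat} {d : 'I_n -> nat} {B0 : 'M[int]_n}.
Implicit Types (m : Mon d) (p q : LP d).

Lemma homog_eq {p q g} : lp_eq p q -> homog B0 q g -> homog B0 p g.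
Proof. by move=> pq hq m; rewrite pq; apply: hq. Qed.

Lemma homog_ext {p g g'} : homog B0 p g -> g =1 g' -> homog B0 p g'.
Proof. by move=> hp gg' m cm i; rewrite -gg'; apply: hp. Qed.

Lemma homog_single (c : int) m0 : homog B0 [:: (c, m0)] (mdeg B0 m0).
Proof. by move=> m; rewrite coeff_single; case: (m0 =P m) => [<-|]; rewrite ?eqxx. Qed.

Lemma homog_one : homog B0 (lp_one d) (fun _ => 0).
Proof.
apply: homog_ext (homog_single 1 mon_one) _ => i.
by rewrite /mdeg /= ffunE big1 ?subr0 // => j _; rewrite ffunE mulr0.
Qed.

Lemma homog_mul {p q g h} :
  homog B0 p g -> homog B0 q h -> homog B0 (lp_mul p q) (fun i => g i + h i).
Proof.
move=> hp hq _ /coeff_lp_mul_neq0 [m [r [cp cq ->]]] i.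
by rewrite mdeg_mul (hp _ cp) (hq _ cq).
Qed.

Lemma homog_pow p g (e : nat) : homog B0 p g -> homog B0 (lp_pow p e) (fun i => e%:Z * g i).
Proof.
move=> hp; elim: e => [|e IH]; first by apply: homog_ext homog_one _ => i; rewrite mul0r.
by apply: homog_ext (homog_mul hp IH) _ => i; rewrite -addn1 PoszD; ring.
Qed.

Lemma homog_prod {T : Type} {s : seq T} {F : T -> LP d} {g : T -> 'I_n -> int} :
  (forall t, homog B0 (F t) (g t)) ->
  homog B0 (lp_prod [seq F t | t <- s]) (fun i => \sum_(t <- s) g t i).
Proof.
move=> hF; elim: s => [|t s IH]; first by apply: homog_ext homog_one _ => i; rewrite big_nil.
by apply: homog_ext (homog_mul (hF t) IH) _ => i; rewrite big_cons.
Qed.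

Lemma homog_flatten (ps : seq (LP d)) g :
  (forall p, p \in ps -> homog B0 p g) -> homog B0 (flatten ps) g.
Proof.
elim: ps => [|p ps IH] hps m; first by rewrite /coeff big_nil eqxx.
rewrite /= coeff_cat; have [->|cp] := eqVneq (coeff p m) 0.
  by rewrite add0r; apply: IH => q qps; apply: hps; rewrite inE qps orbT.
by move=> _; apply: hps (mem_head _ _) _ cp.
Qed.

End HomogeneousProducts.

Section EvalAtOne.
Context {n : nat} {d : 'I_n -> nat}.
Implicit Types (p q : LP d).

(* The value at [x = y = z = 1]. Its positivity certifies that an X-function is nonzero
   and survives the exchange relation, whose right-hand side has positive coefficients. *)
Definition eval1 p : int := \sum_(e <- p) e.1.

Lemma eval1_mul p q : eval1 (lp_mul p q) = eval1 p * eval1 q.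
Proof.
rewrite /eval1 /lp_mul big_allpairs_dep /= mulr_suml.
by apply: eq_bigr => e _; rewrite mulr_sumr.
Qed.

Lemma eval1_one : eval1 (lp_one d) = 1.
Proof. by rewrite /eval1 big_seq1. Qed.

Lemma eval1_trop (t : Trop d) : eval1 (lp_trop t) = 1.
Proof. by rewrite /eval1 big_seq1. Qed.

Lemma eval1_pow p e : eval1 (lp_pow p e) = eval1 p ^+ e.
Proof. by elim: e => [|e IH]; rewrite ?eval1_one // exprS -IH /lp_pow /= eval1_mul. Qed.

Lemma eval1_prod (ps : seq (LP d)) : eval1 (lp_prod ps) = \prod_(p <- ps) eval1 p.
Proof. by elim: ps => [|p ps IH]; rewrite ?big_nil ?eval1_one // big_cons /= eval1_mul IH. Qed.

Lemma eval1_flatten (ps : seq (LP d)) : eval1 (flatten ps) = \sum_(p <- ps) eval1 p.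
Proof. by rewrite /eval1 big_flatten. Qed.

Lemma eval1_coeff p (U : seq (Mon d)) :
  uniq U -> {subset map snd p <= U} -> eval1 p = \sum_(m <- U) coeff p m.
Proof.
move=> uU sU; have := sum_lp_coeff p U (fun _ => 1) uU sU.
by rewrite /eval1; under eq_bigr do rewrite mulr1; under [in RHS]eq_bigr do rewrite mulr1.
Qed.

Lemma eval1_eq {p q} : lp_eq p q -> eval1 p = eval1 q.
Proof.
move=> pq; set U := undup (map snd p ++ map snd q).
have sp : {subset map snd p <= U} by move=> m mp; rewrite mem_undup mem_cat mp.
have sq : {subset map snd q <= U} by move=> m mq; rewrite mem_undup mem_cat mq orbT.
by rewrite (eval1_coeff p U) ?(eval1_coeff q U) ?undup_uniq //; apply: eq_bigr => m _.
Qed.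

Lemma eval1_gt0_neq0 p : 0 < eval1 p -> lp_neq0 p.
Proof.
move/lt0r_neq0; rewrite (eval1_coeff p (undup (map snd p))) ?undup_uniq // => [|m]; last by rewrite mem_undup.
exact: sumr_neq0_exists.
Qed.

End EvalAtOne.

Section TropicalMutation.
Context {n : nat} (d : 'I_n -> nat).

Lemma tsum_fold_y k (y : Trop d) l (a m : nat) :
  (foldr (fun s acc => tmin (tmul (tz d k s) (tpow y s%:Z)) acc) (tone d) (iota a m)).1 l =
  if (0 <= y.1 l) || (m == 0)%N then 0 else (a + m - 1)%:Z * y.1 l.
Proof.
elim: m a => [|m IH] a /=; first by rewrite orbT ffunE.
rewrite ffunE IH !ffunE add0r.
case: (lerP 0 (y.1 l)) => hy /=; first by apply/min_idPr; apply: mulr_ge0.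
case: m {IH} => [|m] /=.
  by rewrite addn1 subn1; apply/min_idPl; apply: mulr_ge0_le0 => //; apply: ltW.
have -> : (a.+1 + m.+1 - 1 = a + m.+2 - 1)%N by lia.
by apply/min_idPr; rewrite ler_nM2r // lez_nat; lia.
Qed.

Lemma tsum_y k (y : Trop d) l : (tsum k y).1 l = (d k)%:Z * Num.min 0 (y.1 l).
Proof.
rewrite /tsum tsum_fold_y add1n subn1 /=.
by case: (lerP 0 (y.1 l)) => hy /=; [rewrite mulr0|case: (d k); rewrite ?mul0r].
Qed.

Lemma ymut_y k (B : 'M[int]_n) (y : 'I_n -> Trop d) i l :
  (ymut d k B y i).1 l =
  if i == k then - (y k).1 l
  else (y i).1 l + posp (B k i) * (d k)%:Z * (y k).1 l
       - B k i * ((d k)%:Z * Num.min 0 ((y k).1 l)).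
Proof.
rewrite /ymut; case: (i == k); rewrite /tpow /tmul /= !ffunE ?mulN1r //.
by rewrite tsum_y mulNr.
Qed.

Lemma seedBY_rcons (B0 : 'M[int]_n) w k :
  seedBY d B0 (rcons w k) =
  (bmut d k (seedBY d B0 w).1, ymut d k (seedBY d B0 w).1 (seedBY d B0 w).2).
Proof. by rewrite /seedBY foldl_rcons. Qed.

End TropicalMutation.

Lemma posp_ge0 x : 0 <= posp x.
Proof. by rewrite /posp; case: ifP. Qed.

Lemma posp_mul (c x : int) : 0 <= c -> posp (c * x) = c * posp x.
Proof.
rewrite /posp => hc; case: (lerP 0 x) => hx; first by rewrite mulr_ge0.
have [->|c0] := eqVneq c 0; first by rewrite mul0r lexx.
by rewrite lt_geF ?mulr0 // pmulr_rlt0 // lt_neqAle eq_sym c0.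
Qed.

(* Multiplied by [rk], each product [bik * bkj] becomes a product of two skew pairs. *)
Lemma skew_bmut_entry (ri rj rk dk bij bji bik bki bjk bkj : int) :
  0 <= ri -> 0 <= rj -> 0 < rk ->
  ri * bij = - (rj * bji) -> ri * bik = - (rk * bki) -> rk * bkj = - (rj * bjk) ->
  ri * (bij + dk * (posp (- bik) * bkj + bik * posp bkj)) =
  - (rj * (bji + dk * (posp (- bjk) * bki + bjk * posp bki))).
Proof.
move=> hi hj hk sij sik skj.
have e1 : ri * posp (- bik) = rk * posp bki.
  by rewrite -(posp_mul _ _ hi) mulrN sik opprK posp_mul // ltW.
have e2 : rk * posp bkj = rj * posp (- bjk).
  by rewrite -(posp_mul _ _ (ltW hk)) skj -mulrN posp_mul.
apply: (mulfI (x := rk)); first by rewrite gt_eqF.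
rewrite (_ : rk * (ri * _) =
   rk * (ri * bij) + dk * ((ri * posp (- bik)) * (rk * bkj) + (ri * bik) * (rk * posp bkj))).
  by rewrite e1 skj sik e2 sij; ring.
by ring.
Qed.

Section SkewSymmetrizable.
Context {n : nat} (d : 'I_n -> nat) (B0 : 'M[int]_n) (r : 'I_n -> nat).
Hypothesis r_gt0 : forall i, (0 < r i)%N.
Hypothesis B0_skew : forall i j, (r i)%:Z * B0 i j = - ((r j)%:Z * B0 j i).

Lemma seedBY_skew w i j :
  (r i)%:Z * (seedBY d B0 w).1 i j = - ((r j)%:Z * (seedBY d B0 w).1 j i).
Proof.
elim/last_ind: w i j => [//|w k IH] i j.
rewrite seedBY_rcons /bmut !mxE /=.
case: (eqVneq i k) => [->|ik]; case: (eqVneq j k) => [->|jk] /=;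
  rewrite ?eqxx ?orbT ?(negbTE ik) ?(negbTE jk) /=; try by rewrite !mulrN IH opprK.
by apply: (skew_bmut_entry _ _ (r k)%:Z); rewrite ?ltz_nat.
Qed.

Lemma seedBY_diag w i : (seedBY d B0 w).1 i i = 0.
Proof.
have /eqP := seedBY_skew w i i; rewrite -addr_eq0 -mulr2n mulrn_eq0 /= mulf_eq0.
by rewrite eqz_nat gtn_eqF //= => /eqP.
Qed.

End SkewSymmetrizable.

Section GMatrices.
Context {n : nat} (d : 'I_n -> nat) (B0 : 'M[int]_n).

(* Column [q] is the c-vector of [y_q]: its exponents in the [y]'s. *)
Definition cmx (y : 'I_n -> Trop d) : 'M[int]_n := \matrix_(l, q) (y q).1 l.

Definition gmut k (B : 'M[int]_n) (y : 'I_n -> Trop d) (G : 'M[int]_n) : 'M[int]_n :=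
  \matrix_(i, j) if j == k then
     - G i k + \sum_(l < n) (d k)%:Z * posp (- B l k) * G i l
             + \sum_(l < n) B0 i l * ((d k)%:Z * Num.min 0 ((y k).1 l))
   else G i j.

Fixpoint gmx_rev (rw : seq 'I_n) : 'M[int]_n :=
  if rw is k :: rw' then
    gmut k (seedBY d B0 (rev rw')).1 (seedBY d B0 (rev rw')).2 (gmx_rev rw')
  else 1%:M.

Definition gmx (w : seq 'I_n) : 'M[int]_n := gmx_rev (rev w).

Lemma gmx_nil : gmx [::] = 1%:M.
Proof. by []. Qed.

Lemma gmx_rcons w k :
  gmx (rcons w k) = gmut k (seedBY d B0 w).1 (seedBY d B0 w).2 (gmx w).
Proof. by rewrite /gmx rev_rcons /= revK. Qed.

Section GmutBmut.
Variables (k : 'I_n) (B G : 'M[int]_n) (y : 'I_n -> Trop d).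
Hypothesis Bkk : B k k = 0.
Hypothesis GB : G *m B = B0 *m cmx y.

Let GBi i q : \sum_(j < n) G i j * B j q = \sum_(l < n) B0 i l * (y q).1 l.
Proof. by move/matrixP/(_ i q): GB; rewrite !mxE; under [in RHS]eq_bigr do rewrite mxE. Qed.

Lemma gmut_mul_bmut_col_k i :
  \sum_(j < n) gmut k B y G i j * bmut d k B j k = - \sum_(l < n) B0 i l * (y k).1 l.
Proof.
rewrite -GBi -sumrN; apply: eq_bigr => j _; rewrite !mxE eqxx orbT.
case: eqVneq => [->|_]; last by rewrite mulrN.
by rewrite Bkk oppr0 !mulr0 oppr0.
Qed.

Lemma gmut_mul_bmut_col q i : q != k ->
  \sum_(j < n) gmut k B y G i j * bmut d k B j q =
  \sum_(l < n) B0 i l * ((y q).1 l + posp (B k q) * (d k)%:Z * (y k).1 l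
                          - B k q * ((d k)%:Z * Num.min 0 ((y k).1 l))).
Proof.
move=> qk; set dk := (d k)%:Z.
set gk := - G i k + \sum_(l < n) dk * posp (- B l k) * G i l
            + \sum_(l < n) B0 i l * (dk * Num.min 0 ((y k).1 l)).
under eq_bigr do rewrite !mxE -/dk -/gk (negbTE qk) orbF.
set F := fun j => G i j * (B j q + dk * (posp (- B j k) * B k q + B j k * posp (B k q))).
have -> : \sum_(j < n) (if j == k then gk else G i j) *
            (if j == k then - B j q
             else B j q + dk * (posp (- B j k) * B k q + B j k * posp (B k q))) =
          \sum_(j < n) F j + (gk * (- B k q) - F k).
  rewrite (bigD1 k) // [in RHS](bigD1 k) //= eqxx.
  rewrite (eq_bigr F) => [|j /negbTE ->//]; ring.
set S1 := \sum_(j < n) posp (- B j k) * G i j.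
set S3 := \sum_(l < n) B0 i l * (dk * Num.min 0 ((y k).1 l)).
have -> : \sum_(j < n) F j = \sum_(j < n) G i j * B j q
    + dk * B k q * S1 + dk * posp (B k q) * \sum_(j < n) G i j * B j k.
  rewrite /F (eq_bigr (fun j => G i j * B j q + dk * B k q * (posp (- B j k) * G i j)
            + dk * posp (B k q) * (G i j * B j k))) => [|j _]; last by ring.
  by rewrite !big_split /= -!mulr_sumr.
have -> : gk = - G i k + dk * S1 + S3.
  by rewrite /gk /S1 mulr_sumr; congr (_ + _ + _); apply: eq_bigr => l _; ring.
have -> : F k = G i k * B k q by rewrite /F Bkk oppr0 /posp lexx !mul0r addr0 mulr0 addr0.
rewrite !GBi [in RHS](eq_bigr (fun l => B0 i l * (y q).1 l
   + posp (B k q) * dk * (B0 i l * (y k).1 l) - B k q * (B0 i l * (dk * Num.min 0 ((y k).1 l))))).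
  by rewrite !big_split /= sumrN -!mulr_sumr -/S3; ring.
by move=> l _; ring.
Qed.

Lemma gmut_mul_bmut : gmut k B y G *m bmut d k B = B0 *m cmx (ymut d k B y).
Proof.
apply/matrixP => i q; rewrite !mxE; under [RHS]eq_bigr do rewrite mxE ymut_y.
have [->|qk] := eqVneq q k; last by rewrite gmut_mul_bmut_col.
by rewrite gmut_mul_bmut_col_k -sumrN; apply: eq_bigr => l _; rewrite mulrN.
Qed.

End GmutBmut.

Lemma gmx_mul_seed (diag0 : forall w i, (seedBY d B0 w).1 i i = 0) w :
  gmx w *m (seedBY d B0 w).1 = B0 *m cmx (seedBY d B0 w).2.
Proof.
elim/last_ind: w => [|w k IH].
  have -> : cmx (yinit d) = 1%:M.
    by apply/matrixP => l q; rewrite !mxE /yinit /= ffunE; case: (l == q).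
  by rewrite gmx_nil mul1mx mulmx1.
by rewrite gmx_rcons seedBY_rcons gmut_mul_bmut.
Qed.

End GMatrices.

Lemma exch_exponent_ge0 (s dk : nat) (b : int) :
  (s <= dk)%N -> 0 <= s%:Z * b + dk%:Z * posp (- b).
Proof.
move=> sd; case: (lerP 0 b) => hb.
  by rewrite addr_ge0 ?mulr_ge0 ?posp_ge0.
rewrite /posp oppr_ge0 (ltW hb) (_ : _ + _ = (dk%:Z - s%:Z) * - b); last by ring.
by rewrite mulr_ge0 // ?subr_ge0 ?lez_nat // oppr_ge0 ltW.
Qed.

Section ExchangeRelation.
Context {n : nat} (d : 'I_n -> nat) (B0 : 'M[int]_n).
Variables (B G : 'M[int]_n) (y : 'I_n -> Trop d) (x : 'I_n -> LP d) (k : 'I_n).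
Hypothesis x_homog : forall j, homog B0 (x j) (fun i => G i j).
Hypothesis x_eval1_gt0 : forall j, 0 < eval1 (x j).
Hypothesis GBk : forall i, \sum_(j < n) G i j * B j k = \sum_(l < n) B0 i l * (y k).1 l.

Definition exch_rhs : LP d :=
  flatten [seq lp_mul (lp_trop (tmul (tz d k s) (tpow (y k) s%:Z)))
                (lp_prod [seq lp_pow (x j) (absz (s%:Z * B j k + (d k)%:Z * posp (- B j k)))
                         | j <- enum 'I_n])
          | s <- iota 0 (d k).+1].

Lemma eval1_exch_rhs_gt0 : 0 < eval1 exch_rhs.
Proof.
have prod_gt0 (a : 'I_n -> nat) : 0 < \prod_(j <- enum 'I_n) eval1 (lp_pow (x j) (a j)).
  by rewrite prodr_gt0 // => j _; rewrite eval1_pow exprn_gt0.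
rewrite eval1_flatten big_map /=.
under eq_bigr do rewrite eval1_mul eval1_trop mul1r eval1_prod big_map.
by rewrite big_cons ltr_wpDr ?sumr_ge0 // => s _; rewrite ltW.
Qed.

(* The [s]-dependent part of the degree of each summand cancels by [GBk]. *)
Lemma homog_exch_rhs :
  homog B0 exch_rhs (fun i => \sum_(j < n) (d k)%:Z * posp (- B j k) * G i j).
Proof.
apply: homog_flatten => _ /mapP [s /[!mem_iota] /andP [_ sd] ->].
set t := tmul (tz d k s) (tpow (y k) s%:Z).
set a := fun j => absz (s%:Z * B j k + (d k)%:Z * posp (- B j k)).
have hpow j : homog B0 (lp_pow (x j) (a j)) (fun i => (a j)%:Z * G i j).
  exact: homog_pow.
apply: homog_ext (homog_mul (homog_single 1 (([ffun _ => 0], t) : Mon d))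
                            (homog_prod hpow)) _ => i.
rewrite /mdeg /= ffunE sub0r big_enum /=.
rewrite [X in _ + X](eq_bigr (fun j =>
  s%:Z * (G i j * B j k) + (d k)%:Z * posp (- B j k) * G i j)).
  rewrite [X in - X + _](eq_bigr (fun l => s%:Z * (B0 i l * (y k).1 l))).
    by rewrite big_split /= -!mulr_sumr GBk addKr.
  by move=> l _; rewrite !ffunE add0r mulrCA.
by move=> j _; rewrite /a gez0_abs ?exch_exponent_ge0 //; ring.
Qed.

Lemma exch_step x' : exch d B y x k x' ->
  homog B0 x' (fun i => gmut d B0 k B y G i k) /\ 0 < eval1 x'.
Proof.
set A := lp_trop (tsum k (y k)).
move=> hex; have {}hex : lp_eq (lp_mul (lp_mul x' (x k)) A) exch_rhs := hex.
have eval1_x'x : eval1 (lp_mul x' (x k)) = eval1 exch_rhs.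
  by rewrite -(eval1_eq hex) !eval1_mul /A eval1_trop mulr1.
have nA : lp_neq0 A by apply: eval1_gt0_neq0; rewrite /A eval1_trop.
have nR := eval1_gt0_neq0 _ eval1_exch_rhs_gt0.
have nx'x : lp_neq0 (lp_mul x' (x k)).
  by apply: eval1_gt0_neq0; rewrite eval1_x'x eval1_exch_rhs_gt0.
have nxk := eval1_gt0_neq0 _ (x_eval1_gt0 k).
have h1 := homog_div hex nA (homog_single 1 _) nR homog_exch_rhs.
have h2 := homog_div (fun m => erefl) nxk (x_homog k) nx'x h1.
split.
  apply: homog_ext h2 _ => i; rewrite /gmut mxE eqxx /mdeg /= ffunE sub0r opprK.
  by under [X in _ + X - _]eq_bigr do rewrite tsum_y; ring.
by move: eval1_exch_rhs_gt0; rewrite -eval1_x'x eval1_mul pmulr_lgt0.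
Qed.

End ExchangeRelation.

Section XFunctions.
Context {n : nat} {d : 'I_n -> nat} {B0 : 'M[int]_n}.
Hypothesis diag0 : forall w i, (seedBY d B0 w).1 i i = 0.
Context {X : seq 'I_n -> 'I_n -> LP d}.
Hypothesis X_pattern : is_XPattern d B0 X.

Lemma homog_xfun w j : homog B0 (X w j) (fun i => gmx d B0 w i j) /\ 0 < eval1 (X w j).
Proof.
case: X_pattern => X0 Xmut; elim/last_ind: w j => [|w k IH] j.
  rewrite gmx_nil (eval1_eq (X0 j)) /eval1 big_seq1; split=> //.
  apply: homog_eq (X0 j) _; apply: homog_ext (homog_single 1 _) _ => i.
  rewrite /mdeg /= big1 => [|l _]; last by rewrite ffunE mulr0.
  by rewrite ffunE !mxE subr0 eq_sym; case: (j == i).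
have [Xfix Xexch] := Xmut w k.
have [->|jk] := eqVneq j k.
  have GBk i : \sum_(l < n) gmx d B0 w i l * (seedBY d B0 w).1 l k =
               \sum_(l < n) B0 i l * ((seedBY d B0 w).2 k).1 l.
    move/matrixP/(_ i k): (gmx_mul_seed d B0 diag0 w); rewrite !mxE.
    by under [in RHS]eq_bigr do rewrite mxE.
  rewrite gmx_rcons; apply: exch_step Xexch => [j'|j'|//].
    exact: (IH j').1.
  exact: (IH j').2.
have [homX evalX] := IH j; split; last by rewrite (eval1_eq (Xfix j jk)).
apply: homog_eq (Xfix j jk) _; apply: homog_ext homX _ => i.
by rewrite gmx_rcons mxE (negbTE jk).
Qed.

Lemma Gmatrix_gmx {t G} : is_Gmatrix d B0 X t G -> G = gmx d B0 t.
Proof.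
move=> hG; apply/matrixP => i j; have [homX evalX] := homog_xfun t j.
have [m cm] := eval1_gt0_neq0 _ evalX.
by rewrite -(hG j m cm i) (homX m cm i).
Qed.

End XFunctions.

Section RescaledPattern.
Context {n : nat} (d : 'I_n -> nat) (B : 'M[int]_n).

Lemma seedBY_dmat w :
  (seedBY (ones n) (dmat d B) w).1 = dmat d (seedBY d B w).1 /\
  forall i l, ((seedBY (ones n) (dmat d B) w).2 i).1 l = ((seedBY d B w).2 i).1 l.
Proof.
elim/last_ind: w => [|w k [IHB IHy]]; first by split=> // i l; rewrite /= /yinit !ffunE.
rewrite !seedBY_rcons /=; split.
  apply/matrixP => i j; rewrite IHB /bmut /dmat !mxE.
  case: ifP => _; first by rewrite mulrN.
  by rewrite /ones mul1r -mulrN !posp_mul //; ring.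
move=> i l; rewrite !ymut_y IHB /dmat !mxE !IHy /ones.
by case: ifP => // _; rewrite -mulrN posp_mul //; ring.
Qed.

Lemma gmx_dmat w i j :
  (d i)%:Z * gmx d B w i j = gmx (ones n) (dmat d B) w i j * (d j)%:Z.
Proof.
elim/last_ind: w i j => [|w k IH] i j.
  by rewrite !gmx_nil !mxE; case: eqVneq => [->|_]; [rewrite mulrC|rewrite mulr0 mul0r].
have [SB Sy] := seedBY_dmat w.
rewrite !gmx_rcons /gmut !mxE; case: ifP => [/eqP ->|_]; last exact: IH.
rewrite SB !mulrDr !mulrDl mulrN IH mulNr; congr (_ + _ + _).
  rewrite mulr_sumr mulr_suml; apply: eq_bigr => l _.
  by rewrite !mxE /ones mul1r -mulrN posp_mul // mulrCA IH; ring.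
by rewrite mulr_sumr mulr_suml; apply: eq_bigr => l _; rewrite !mxE /ones Sy; ring.
Qed.

End RescaledPattern.

Theorem mainTheorem13 (n : nat) (B : 'M[int]_n) (d : 'I_n -> nat)
  (hd : forall i, (0 < d i)%N) (hB : skew_symmetrizable B)
  (X : seq 'I_n -> 'I_n -> LP d) (hX : is_XPattern d B X)
  (X1 : seq 'I_n -> 'I_n -> LP (ones n)) (hX1 : is_XPattern (ones n) (dmat d B) X1)
  (t : seq 'I_n) (G G1 : 'M[int]_n)
  (hG : is_Gmatrix d B X t G) (hG1 : is_Gmatrix (ones n) (dmat d B) X1 t G1) :
  forall i j, (d i)%:Z * G i j = G1 i j * (d j)%:Z.
Proof.
case: hB => r [r_gt0 B_skew].
have diag0 := seedBY_diag d B r r_gt0 B_skew.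
have diag0_dmat w i : (seedBY (ones n) (dmat d B) w).1 i i = 0.
  by rewrite (seedBY_dmat d B w).1 mxE diag0 mulr0.
rewrite (Gmatrix_gmx diag0 hX hG) (Gmatrix_gmx diag0_dmat hX1 hG1).
exact: gmx_dmat.
Qed.
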